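(* Let $S,P,Q$ be pairwise disjoint finite sets and $\mathcal{M}_{SP},\mathcal{M}_{PQ}$ matroids on $S\uplus P$, $P\uplus Q$ with $\mathcal{M}_{SP}\circ P=\mathcal{M}^*_{PQ}\circ P$ and $\mathcal{M}_{SP}\times P=\mathcal{M}^*_{PQ}\times P$. Then: 1. $(\mathcal{M}_{SP}\leftrightarrow\mathcal{M}_{PQ})\circ S=\mathcal{M}_{SP}\circ S$ and $(\mathcal{M}_{SP}\leftrightarrow\mathcal{M}_{PQ})\times S=\mathcal{M}_{SP}\times S$. 2. $\mathcal{M}^*_{SP}\circ P=\mathcal{M}_{PQ}\circ P$, $\mathcal{M}^*_{SP}\times P=\mathcal{M}_{PQ}\times P$, and $(\mathcal{M}_{SP}\leftrightarrow\mathcal{M}_{PQ})\circ Q=\mathcal{M}_{PQ}\circ Q$, $(\mathcal{M}_{SP}\leftrightarrow\mathcal{M}_{PQ})\times Q=\mathcal{M}_{PQ}\times Q$.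
   Context: Matroids on finite sets, given by bases; $\mathcal{M}^*$ dual. $\mathcal{M}\circ T$ restriction (independent sets inside $T$), $\mathcal{M}\times T$ contraction (bases = minimal sets $b\cap T$, $b$ a base). $\mathbf{0}_X$ only base $\emptyset$; $\oplus$ direct sum. For matroids on the same set, $\mathcal{M}_1\vee\mathcal{M}_2$ has bases the maximal sets $b_1\cup b_2$. $\mathcal{M}_{SP}\leftrightarrow\mathcal{M}_{PQ}:=((\mathcal{M}_{SP}\oplus\mathbf{0}_Q)\vee(\mathcal{M}_{PQ}\oplus\mathbf{0}_S))\times(S\uplus Q)$. *)

From mathcomp Require Import all_boot.
Set Implicit Arguments. Unset Strict Implicit. Unset Printing Implicit Defensive.

(* A (candidate) matroid on a finite ground set E ⊆ T, given by its set of bases.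
   All finite sets of the paper are modelled as subsets of one finite universe T. *)
Record matroid (T : finType) := Matroid { ground : {set T}; bases : {set {set T}} }.

Section Matroids.
Variable T : finType.
Implicit Types (M : matroid T) (X A : {set T}).

Definition is_matroid M : Prop :=
  [/\ bases M != set0,
      forall b, b \in bases M -> b \subset ground M &
      forall b1 b2, b1 \in bases M -> b2 \in bases M ->
        forall x, x \in b1 :\: b2 ->
          exists2 y, y \in b2 :\: b1 & (b1 :\ x) :|: [set y] \in bases M].

Definition indep M X : bool := [exists b in bases M, X \subset b].

Definition dual M : matroid T :=
  Matroid (ground M) [set ground M :\: b | b in bases M].

Definition restr M A : matroid T :=
  Matroid A [set X | maxset (fun Y => (Y \subset A) && indep M Y) X].

Definition contr M A : matroid T :=
  Matroid A [set X | minset (fun Y => [exists b in bases M, Y == b :&: A]) X].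

Definition zero_matroid X : matroid T := Matroid X [set set0].

Definition dsum M1 M2 : matroid T :=
  Matroid (ground M1 :|: ground M2)
          [set b1 :|: b2 | b1 in bases M1, b2 in bases M2].

Definition munion M1 M2 : matroid T :=
  Matroid (ground M1 :|: ground M2)
    [set X | maxset (fun Y => Y \in [set b1 :|: b2 | b1 in bases M1, b2 in bases M2]) X].

(* linking M_SP <-> M_PQ := ((M_SP ⊕ 0_Q) ∨ (M_PQ ⊕ 0_S)) × (S ⊎ Q) *)
Definition link (S Q : {set T}) (MSP MPQ : matroid T) : matroid T :=
  contr (munion (dsum MSP (zero_matroid Q)) (dsum MPQ (zero_matroid S))) (S :|: Q).

End Matroids.

(* The traces [b :&: A] of the bases of a matroid on a set A determine M o A
   (whose bases are the maximal traces) and M x A (the minimal traces); conversely,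
   by augmentation, every X with c :&: A <= X <= b :&: A is again a trace.  So the
   hypotheses say that the traces of M_SP on P are exactly the complements in P of
   the bases of M_PQ, and dualising gives the statement about M_SP^* on P.  If
   b1 :&: P = P :\: b2, then b1 and b2 are disjoint, so b1 :|: b2 has maximum size
   among unions of bases, and since it covers P its trace on S :|: Q is a minimal
   one, i.e. a base of the linking.  Every base of the linking being the trace of
   some b1 :|: b2, the traces of the linking on S and on Q are those of M_SP and
   M_PQ. *)

From mathcomp Require Import all_boot.
Set Implicit Arguments. Unset Strict Implicit. Unset Printing Implicit Defensive.

Section MatroidBases.
Variables (T : finType) (M : matroid T).
Hypothesis mM : is_matroid M.
Implicit Types (b c I : {set T}) (x y : T).

Lemma base_sub_ground b : b \in bases M -> b \subset ground M.
Proof. by case: mM => _ + _; apply. Qed.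

Lemma base_exchange b1 b2 x : b1 \in bases M -> b2 \in bases M -> x \in b1 :\: b2 ->
  exists2 y, y \in b2 :\: b1 & (b1 :\ x) :|: [set y] \in bases M.
Proof. by case: mM => _ _ ex B1 B2; apply: ex. Qed.

Lemma setD_exchange b c x y : y \in c ->
  ((b :\ x) :|: [set y]) :\: c = (b :\: c) :\ x.
Proof.
move=> yc; apply/setP=> z; rewrite !inE.
by case: (z =P y) => [->|_]; rewrite ?yc ?andbF //= orbF andbCA.
Qed.

Lemma card_base_eq b1 b2 : b1 \in bases M -> b2 \in bases M -> #|b1| = #|b2|.
Proof.
have [n] := ubnP #|b1 :\: b2|; elim: n b1 => // n IH b1 lt_n B1 B2.
have [b12_0 | [x x12]] := set_0Vmem (b1 :\: b2).
  suff -> : b1 = b2 by [].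
  apply/eqP; rewrite eqEsubset -[b1 \subset b2]setD_eq0 b12_0 eqxx /=.
  apply/subsetP=> z z2.
  apply/negPn/negP => z1; have z21 : z \in b2 :\: b1 by rewrite inE z1.
  by have [y] := base_exchange B2 B1 z21; rewrite b12_0 inE.
have [y y21 B1'] := base_exchange B1 B2 x12.
move: x12 y21; rewrite !inE => /andP[x2 x1] /andP[y1 y2].
rewrite -(IH _ _ B1' B2); last first.
  rewrite setD_exchange // -ltnS (leq_trans _ lt_n) // ltnS.
  by rewrite [#|b1 :\: b2|](cardsD1 x) !inE x2 x1.
by rewrite setUC cardsU1 !inE (negbTE y1) andbF [#|b1|](cardsD1 x) x1.
Qed.

Lemma base_augment b c I : b \in bases M -> c \in bases M -> I \subset b ->
  exists b', [/\ b' \in bases M, I \subset b' & b' \subset I :|: c].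
Proof.
have [n] := ubnP #|b :\: (I :|: c)|; elim: n b => // n IH b lt_n Bb Bc Ib.
have [bIc_0 | [x xb]] := set_0Vmem (b :\: (I :|: c)).
  by exists b; split=> //; rewrite -setD_eq0 bIc_0.
move: (xb); rewrite !inE negb_or => /andP[/andP[xI xc] x_b].
have xbc : x \in b :\: c by rewrite inE xc x_b.
have [y /setDP[yc _] B'] := base_exchange Bb Bc xbc.
apply: IH B' Bc _.
  by rewrite setD_exchange ?inE ?yc ?orbT // -ltnS (leq_trans _ lt_n) // ltnS
    [#|b :\: _|](cardsD1 x) xb.
apply/subsetP=> z zI; rewrite !inE (subsetP Ib z zI) andbT.
by apply/orP; left; apply: contraNneq xI => <-.
Qed.

Lemma base_coexchange b1 b2 x : b1 \in bases M -> b2 \in bases M -> x \in b2 :\: b1 ->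
  exists2 y, y \in b1 :\: b2 & (b1 :\ y) :|: [set x] \in bases M.
Proof.
move=> B1 B2 /setDP[x2 x1].
have Ib2 : x |: (b1 :&: b2) \subset b2 by rewrite subUset sub1set x2 subsetIr.
have [b [Bb Ib bI]] := base_augment B2 B1 Ib2.
have b_sub : b \subset x |: b1.
  apply/subsetP=> z /(subsetP bI); rewrite !inE.
  by case/orP=> [/orP[->|/andP[->]]|->]; rewrite ?orbT.
have xb : x \in b by rewrite (subsetP Ib) // setU11.
have [y y1 yb] : exists2 y, y \in b1 & y \notin b.
  apply/subsetPn/negP => b1b.
  have := subset_leq_card (_ : x |: b1 \subset b); rewrite subUset sub1set xb b1b.
  by rewrite cardsU1 x1 (card_base_eq B1 Bb) ltnn => /(_ isT).
exists y.
  rewrite inE y1 andbT; apply: contraNN yb => y2.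
  by rewrite (subsetP Ib) // !inE y1 y2 orbT.
suff -> : b1 :\ y :|: [set x] = b by [].
apply/eqP; rewrite eq_sym eqEcard; apply/andP; split.
  apply/subsetP=> z zb; have := subsetP b_sub z zb; rewrite !inE.
  case/orP=> [->|z1]; rewrite ?orbT // z1 andbT.
  by apply/orP; left; apply: contraNneq yb => <-.
rewrite -(card_base_eq B1 Bb) [#|b1|](cardsD1 y) y1 setUC cardsU1 !inE.
by rewrite (negbTE x1) andbF.
Qed.

Lemma dual_matroid : is_matroid (dual M).
Proof.
split=> /=.
- by rewrite imset_eq0; case: mM.
- by move=> _ /imsetP[b _ ->]; apply: subsetDl.
move=> _ _ /imsetP[b1 B1 ->] /imsetP[b2 B2 ->] x /setDP[/setDP[xE x1]].
rewrite inE xE andbT negbK => x2.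
have x21 : x \in b2 :\: b1 by rewrite inE x1 x2.
have [y /setDP[y1 y2] By] := base_coexchange B1 B2 x21.
have yE : y \in ground M by rewrite (subsetP (base_sub_ground B1)).
exists y; first by rewrite !inE yE y1 y2.
suff -> : (ground M :\: b1) :\ x :|: [set y] = ground M :\: ((b1 :\ y) :|: [set x]).
  exact: imset_f.
apply/setP=> z; rewrite !inE.
have xy : (x == y) = false by apply: contraNF x1 => /eqP->.
case: (z =P x) => [->|_]; first by rewrite xE (negbTE x1) xy.
by case: (z =P y) => [->|_]; rewrite /= ?y1 ?yE ?orbF ?orbT ?andbT.
Qed.
End MatroidBases.

Section Traces.
Variable T : finType.
Implicit Types (M : matroid T) (A X Y b c : {set T}).

Definition traces M A := [set b :&: A | b in bases M].

Lemma restr_traces M A :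
  restr M A = Matroid A [set X | maxset (fun Y => [exists Z in traces M A, Y \subset Z]) X].
Proof.
congr Matroid; apply/setP=> X; rewrite !inE; apply: maxset_eq => Y /=.
apply/andP/existsP => [[YA /existsP[b /andP[Bb Yb]]]|[_ /andP[/imsetP[b Bb ->]]]].
  by exists (b :&: A); rewrite subsetI Yb YA !andbT; apply/imsetP; exists b.
by rewrite subsetI => /andP[Yb YA]; split=> //; apply/existsP; exists b; rewrite Bb.
Qed.

Lemma contr_traces M A :
  contr M A = Matroid A [set X | minset (fun Y => Y \in traces M A) X].
Proof.
congr Matroid; apply/setP=> X; rewrite !inE; apply: minset_eq => Y /=.
by apply/existsP/imsetP => [[b /andP[Bb /eqP->]]|[b Bb ->]]; exists b; rewrite ?Bb ?eqxx.
Qed.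

Lemma restr_contr_eq_of_traces M1 M2 A : traces M1 A = traces M2 A ->
  restr M1 A = restr M2 A /\ contr M1 A = contr M2 A.
Proof. by move=> E; rewrite !restr_traces !contr_traces E. Qed.

Lemma restr_bases_cover M A X :
  (exists2 B, B \in bases (restr M A) & X \subset B) <->
  (exists2 Z, Z \in traces M A & X \subset Z).
Proof.
rewrite restr_traces /=; split=> [[B] | [Z TZ XZ]].
  rewrite inE => /maxsetp/existsP[Z /andP[TZ BZ]] XB.
  by exists Z => //; apply: subset_trans BZ.
have XT : [exists Z in traces M A, X \subset Z] by apply/existsP; exists Z; rewrite TZ.
have [B BM XB] := @maxset_exists _ (fun Y => [exists Z in traces M A, Y \subset Z]) X XT.
by exists B; rewrite ?inE.
Qed.

Lemma contr_bases_cover M A X :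
  (exists2 C, C \in bases (contr M A) & C \subset X) <->
  (exists2 Z, Z \in traces M A & Z \subset X).
Proof.
rewrite contr_traces /=; split=> [[C] | [Z TZ ZX]].
  by rewrite inE => /minsetp TC CX; exists C.
have [C CM CZ] := @minset_exists _ (fun Y => Y \in traces M A) Z TZ.
by exists C; rewrite ?inE //; apply: subset_trans ZX.
Qed.

Lemma mem_traces_between M A X b c : is_matroid M ->
  b \in bases M -> c \in bases M -> c :&: A \subset X -> X \subset b :&: A ->
  X \in traces M A.
Proof.
move=> mM Bb Bc cX; rewrite subsetI => /andP[Xb XA].
have [b' [Bb' Xb' b'X]] := base_augment mM Bb Bc Xb.
apply/imsetP; exists b' => //; apply/eqP; rewrite eqEsubset subsetI Xb' XA /=.
apply/subsetP=> z /setIP[/(subsetP b'X)/setUP[//|zc] zA].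
by apply: (subsetP cX); rewrite inE zc zA.
Qed.

Lemma mem_traces M A X : is_matroid M ->
  X \in traces M A <->
  (exists2 B, B \in bases (restr M A) & X \subset B) /\
  (exists2 C, C \in bases (contr M A) & C \subset X).
Proof.
move=> mM; split=> [TX | [/restr_bases_cover[_ /imsetP[b Bb ->] Xb]]].
  by split; [apply/restr_bases_cover | apply/contr_bases_cover]; exists X.
case/contr_bases_cover=> _ /imsetP[c Bc ->] cX.
exact: mem_traces_between mM Bb Bc cX Xb.
Qed.

Lemma traces_eq_of_restr_contr M1 M2 A : is_matroid M1 -> is_matroid M2 ->
  restr M1 A = restr M2 A -> contr M1 A = contr M2 A -> traces M1 A = traces M2 A.
Proof.
move=> m1 m2 Er Ec; apply/setP=> X; apply/idP/idP.
  by move/(mem_traces _ _ m1); rewrite Er Ec => /(mem_traces _ _ m2).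
by move/(mem_traces _ _ m2); rewrite -Er -Ec => /(mem_traces _ _ m1).
Qed.

Lemma traces_dual M A : A \subset ground M ->
  traces (dual M) A = [set A :\: b | b in bases M].
Proof.
move=> AE; rewrite /traces -imset_comp; apply: eq_imset => b.
by rewrite /= setIDAC (setIidPr AE).
Qed.

Lemma traces_dual_swap M N A : A \subset ground M -> A \subset ground N ->
  traces M A = traces (dual N) A -> traces (dual M) A = traces N A.
Proof.
move=> AM AN E; rewrite !traces_dual //.
have -> : [set A :\: b | b in bases M] = [set A :\: Z | Z in traces M A].
  by rewrite -imset_comp; apply: eq_imset => b; rewrite /= setDIr setDv setU0.
rewrite E traces_dual // -imset_comp; apply: eq_imset => b.
by rewrite /= setDDr setDv set0U setIC.
Qed.

End Traces.

Section Link.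
Variables (T : finType) (S P Q : {set T}) (MSP MPQ : matroid T).
Hypotheses (dSP : [disjoint S & P]) (dPQ : [disjoint P & Q]) (dSQ : [disjoint S & Q]).
Hypotheses (mSP : is_matroid MSP) (gSP : ground MSP = S :|: P).
Hypotheses (mPQ : is_matroid MPQ) (gPQ : ground MPQ = P :|: Q).

Lemma dsum_zero (M : matroid T) X : bases (dsum M (zero_matroid X)) = bases M.
Proof.
apply/setP=> b; apply/imset2P/idP => [[b1 _ Bb1 /set1P -> ->]|Bb]; first by rewrite setU0.
by exists b set0; rewrite ?inE ?setU0.
Qed.

Lemma link_bases :
  bases (link S Q MSP MPQ) = bases (contr (munion MSP MPQ) (S :|: Q)).
Proof. by rewrite /link /contr /munion !dsum_zero. Qed.

Lemma base_SP_sub b : b \in bases MSP -> b \subset S :|: P.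
Proof. by rewrite -gSP; apply: base_sub_ground. Qed.

Lemma base_PQ_sub b : b \in bases MPQ -> b \subset P :|: Q.
Proof. by rewrite -gPQ; apply: base_sub_ground. Qed.

Lemma link_base_meetS b1 b2 : b2 \in bases MPQ ->
  (b1 :|: b2) :&: (S :|: Q) :&: S = b1 :&: S.
Proof.
move=> B2; rewrite -setIA (setIidPr (subsetUl S Q)) setIUl.
suff -> : b2 :&: S = set0 by rewrite setU0.
apply/setP=> z; rewrite !inE; apply/andP=> -[zb zS].
have := subsetP (base_PQ_sub B2) z zb.
by rewrite inE (disjointFr dSP zS) (disjointFr dSQ zS).
Qed.

Lemma link_base_meetQ b1 b2 : b1 \in bases MSP ->
  (b1 :|: b2) :&: (S :|: Q) :&: Q = b2 :&: Q.
Proof.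
move=> B1; rewrite -setIA (setIidPr (subsetUr S Q)) setIUl.
suff -> : b1 :&: Q = set0 by rewrite set0U.
apply/setP=> z; rewrite !inE; apply/andP=> -[zb zQ].
have := subsetP (base_SP_sub B1) z zb.
by rewrite inE (disjointFl dSQ zQ) (disjointFl dPQ zQ).
Qed.

Lemma link_base_union L : L \in bases (link S Q MSP MPQ) ->
  exists2 b1, b1 \in bases MSP &
  exists2 b2, b2 \in bases MPQ & L = (b1 :|: b2) :&: (S :|: Q).
Proof.
rewrite link_bases contr_traces inE => /minsetp/imsetP[W].
by rewrite inE => /maxsetp/imset2P[b1 b2 B1 B2 ->] ->; exists b1 => //; exists b2.
Qed.

Lemma link_base_complementary b1 b2 : b1 \in bases MSP -> b2 \in bases MPQ ->
  b1 :&: P = P :\: b2 -> (b1 :|: b2) :&: (S :|: Q) \in bases (link S Q MSP MPQ).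
Proof.
move=> B1 B2 b12P.
have b1P z : z \in P -> (z \in b1) = (z \notin b2).
  by move=> zP; move/setP: b12P => /(_ z); rewrite !inE zP !andbT.
have disj12 : b1 :&: b2 = set0.
  apply/setP=> z; rewrite !inE; apply/andP=> -[zb1 zb2].
  have /setUP[zS|zP] := subsetP (base_SP_sub B1) z zb1; last by rewrite b1P ?zb2 in zb1.
  have /setUP[zP|zQ] := subsetP (base_PQ_sub B2) z zb2; first by rewrite b1P ?zb2 in zb1.
  by rewrite (disjointFr dSQ zS) in zQ.
have P_sub z : z \in P -> z \in b1 :|: b2 by move=> zP; rewrite inE b1P //; apply: orNb.
have B12 : b1 :|: b2 \in bases (munion MSP MPQ).
  rewrite inE; apply/maxsetP.
  split=> [|_ /imset2P[c1 c2 C1 C2 ->] sub]; first exact: imset2_f.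
  apply/esym/eqP; rewrite eqEcard sub /= [#|b1 :|: b2|]cardsU disj12 cards0 subn0.
  by rewrite (card_base_eq mSP B1 C1) (card_base_eq mPQ B2 C2) cardsU leq_subr.
rewrite link_bases contr_traces inE; apply/minsetP.
split=> [|_ /imsetP[W] /[!inE] W_max -> sub]; first exact: imset_f.
suff -> : W = b1 :|: b2 by [].
apply: esym; apply: (maxsetsup W_max); first by move: B12; rewrite inE => /maxsetp.
move/maxsetp: W_max sub => /imset2P[c1 c2 C1 C2 ->] sub.
apply/subsetP=> z zc; case zP: (z \in P); first exact: P_sub.
have zSQ : z \in S :|: Q.
  move: zc => /setUP[/(subsetP (base_SP_sub C1))|/(subsetP (base_PQ_sub C2))];
    by rewrite !inE zP /= ?orbF => ->; rewrite ?orbT.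
have zW : z \in (c1 :|: c2) :&: (S :|: Q) by rewrite inE zc zSQ.
by case/setIP: (subsetP sub z zW).
Qed.

Lemma traces_link : traces MSP P = traces (dual MPQ) P ->
  traces (link S Q MSP MPQ) S = traces MSP S /\
  traces (link S Q MSP MPQ) Q = traces MPQ Q.
Proof.
rewrite traces_dual ?gPQ ?subsetUl // => trP.
split; apply/setP=> X; apply/imsetP/imsetP.
- by case=> _ /link_base_union[b1 B1 [b2 B2 ->]] ->; exists b1; rewrite ?link_base_meetS.
- case=> b1 B1 ->.
  have /imsetP[b2 B2 b12P] : b1 :&: P \in [set P :\: b | b in bases MPQ].
    by rewrite -trP; apply: imset_f.
  by exists ((b1 :|: b2) :&: (S :|: Q)); rewrite ?link_base_meetS ?link_base_complementary.
- by case=> _ /link_base_union[b1 B1 [b2 B2 ->]] ->; exists b2; rewrite ?link_base_meetQ.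
- case=> b2 B2 ->.
  have /imsetP[b1 B1 b12P] : P :\: b2 \in traces MSP P by rewrite trP; apply: imset_f.
  by exists ((b1 :|: b2) :&: (S :|: Q)); rewrite ?link_base_meetQ ?link_base_complementary.
Qed.
End Link.

Theorem lemma7 (T : finType) (S P Q : {set T}) (MSP MPQ : matroid T) :
  [disjoint S & P] -> [disjoint P & Q] -> [disjoint S & Q] ->
  is_matroid MSP -> ground MSP = S :|: P ->
  is_matroid MPQ -> ground MPQ = P :|: Q ->
  restr MSP P = restr (dual MPQ) P ->
  contr MSP P = contr (dual MPQ) P ->
  (restr (link S Q MSP MPQ) S = restr MSP S /\
   contr (link S Q MSP MPQ) S = contr MSP S) /\
  (restr (dual MSP) P = restr MPQ P /\
   contr (dual MSP) P = contr MPQ P /\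
   restr (link S Q MSP MPQ) Q = restr MPQ Q /\
   contr (link S Q MSP MPQ) Q = contr MPQ Q).
Proof.
move=> dSP dPQ dSQ mSP gSP mPQ gPQ Er Ec.
have trP := traces_eq_of_restr_contr mSP (dual_matroid mPQ) Er Ec.
have [trS trQ] := traces_link dSP dPQ dSQ mSP gSP mPQ gPQ trP.
have trP' : traces (dual MSP) P = traces MPQ P.
  by apply: traces_dual_swap trP; rewrite ?gSP ?gPQ ?subsetUr ?subsetUl.
split; first exact: restr_contr_eq_of_traces trS.
have [rP cP] := restr_contr_eq_of_traces trP'.
have [rQ cQ] := restr_contr_eq_of_traces trQ.
by [].
Qed.
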